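(* Consider the following chemical reaction network (the ERK cascade with three phosphatases and no feedback) with 22 species RAF, pRAF, MEK, pMEK, ppMEK, ERK, pERK, ppERK, RAS, RAFPH, MEKPH, ERKPH, RAS-RAF, MEK-pRAF, pMEK-pRAF, ERK-ppMEK, pERK-ppMEK, RAF-RAFPH, ppMEK-MEKPH, pMEK-MEKPH, ppERK-ERKPH, pERK-ERKPH and 30 reactions with rate constants $k_1,\dots,k_{30}$: RAF + RAS $\underset{k_2}{\overset{k_1}{\rightleftarrows}}$ RAS-RAF $\overset{k_3}{\to}$ pRAF + RAS; pRAF + RAFPH $\underset{k_5}{\overset{k_4}{\rightleftarrows}}$ RAF-RAFPH $\overset{k_6}{\to}$ RAF + RAFPH; MEK + pRAF $\underset{k_8}{\overset{k_7}{\rightleftarrows}}$ MEK-pRAF $\overset{k_9}{\to}$ pMEK + pRAF $\underset{k_{11}}{\overset{k_{10}}{\rightleftarrows}}$ pMEK-pRAF $\overset{k_{12}}{\to}$ ppMEK + pRAF; ppMEK + MEKPH $\underset{k_{14}}{\overset{k_{13}}{\rightleftarrows}}$ ppMEK-MEKPH $\overset{k_{15}}{\to}$ pMEK + MEKPH $\underset{k_{17}}{\overset{k_{16}}{\rightleftarrows}}$ pMEK-MEKPH $\overset{k_{18}}{\to}$ MEK + MEKPH; ERK + ppMEK $\underset{k_{20}}{\overset{k_{19}}{\rightleftarrows}}$ ERK-ppMEK $\overset{k_{21}}{\to}$ pERK + ppMEK $\underset{k_{23}}{\overset{k_{22}}{\rightleftarrows}}$ pERK-ppMEK $\overset{k_{24}}{\to}$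 ppERK + ppMEK; ppERK + ERKPH $\underset{k_{26}}{\overset{k_{25}}{\rightleftarrows}}$ ppERK-ERKPH $\overset{k_{27}}{\to}$ pERK + ERKPH $\underset{k_{29}}{\overset{k_{28}}{\rightleftarrows}}$ pERK-ERKPH $\overset{k_{30}}{\to}$ ERK + ERKPH. Then the associated mass-action system has the capacity for multistationarity: there exist positive rate constants $k\in\mathbb{R}^{30}_{>0}$ and a stoichiometric compatibility class containing two distinct positive steady states, and these can be chosen so that both steady states are stable.
   Context: For a reaction network with species concentrations $x\in\mathbb{R}^s$ and reactions $y\to y'$ (complexes $y,y'\in\mathbb{Z}_{\ge0}^s$) with positive rate constants, the mass-action system is $\dot x=\sum_{y\to y'}k_{y\to y'}x^{y}(y'-y)$. The stoichiometric subspace $\mathcal{S}$ is the span of all reaction vectors $y'-y$; the stoichiometric compatibility class of $x^0\in\mathbb{R}^s_{>0}$ is $(x^0+\mathcal{S})\cap\mathbb{R}^s_{\ge0}$, which is forward invariant. A positive steady state is $x\in\mathbb{R}^s_{>0}$ with $\dot x=0$. The system exhibits multistationarity if some stoichiometric compatibility class contains two or more steady states in its relative interior; a network has the capacity for multistationarity if this happens for some choice of positive rate constants. Stability of a steady state is understood for the dynamics restricted to its stoichiometric compatibility class. *)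

From Stdlib Require Import Reals.
From mathcomp Require Import all_boot all_order all_algebra.
From mathcomp Require Import Rstruct complex.

Set Implicit Arguments.
Unset Strict Implicit.
Unset Printing Implicit Defensive.
Import Order.TTheory GRing.Theory Num.Theory.
Local Open Scope ring_scope.

Notation Real := Rdefinitions.R.

Definition RAF := 0%N.        Definition pRAF := 1%N.
Definition MEK := 2%N.        Definition pMEK := 3%N.
Definition ppMEK := 4%N.      Definition ERK := 5%N.
Definition pERK := 6%N.       Definition ppERK := 7%N.
Definition RAS := 8%N.        Definition RAFPH := 9%N.
Definition MEKPH := 10%N.     Definition ERKPH := 11%N.
Definition RAS_RAF := 12%N.   Definition MEK_pRAF := 13%N.
Definition pMEK_pRAF := 14%N. Definition ERK_ppMEK := 15%N.
Definition pERK_ppMEK := 16%N. Definition RAF_RAFPH := 17%N.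
Definition ppMEK_MEKPH := 18%N. Definition pMEK_MEKPH := 19%N.
Definition ppERK_ERKPH := 20%N. Definition pERK_ERKPH := 21%N.

(* ---- Reactions (30): entry r (0-based) is the reaction with rate k_{r+1};
   a complex is given as the multiset (list) of its species. ---- *)
Definition erk_reactions : seq (seq nat * seq nat) :=
  [:: ([:: RAF; RAS], [:: RAS_RAF]);
      ([:: RAS_RAF], [:: RAF; RAS]);
      ([:: RAS_RAF], [:: pRAF; RAS]);
      ([:: pRAF; RAFPH], [:: RAF_RAFPH]);
      ([:: RAF_RAFPH], [:: pRAF; RAFPH]);
      ([:: RAF_RAFPH], [:: RAF; RAFPH]);
      ([:: MEK; pRAF], [:: MEK_pRAF]);
      ([:: MEK_pRAF], [:: MEK; pRAF]);
      ([:: MEK_pRAF], [:: pMEK; pRAF]);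
      ([:: pMEK; pRAF], [:: pMEK_pRAF]);
      ([:: pMEK_pRAF], [:: pMEK; pRAF]);
      ([:: pMEK_pRAF], [:: ppMEK; pRAF]);
      ([:: ppMEK; MEKPH], [:: ppMEK_MEKPH]);
      ([:: ppMEK_MEKPH], [:: ppMEK; MEKPH]);
      ([:: ppMEK_MEKPH], [:: pMEK; MEKPH]);
      ([:: pMEK; MEKPH], [:: pMEK_MEKPH]);
      ([:: pMEK_MEKPH], [:: pMEK; MEKPH]);
      ([:: pMEK_MEKPH], [:: MEK; MEKPH]);
      ([:: ERK; ppMEK], [:: ERK_ppMEK]);
      ([:: ERK_ppMEK], [:: ERK; ppMEK]);
      ([:: ERK_ppMEK], [:: pERK; ppMEK]);
      ([:: pERK; ppMEK], [:: pERK_ppMEK]);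
      ([:: pERK_ppMEK], [:: pERK; ppMEK]);
      ([:: pERK_ppMEK], [:: ppERK; ppMEK]);
      ([:: ppERK; ERKPH], [:: ppERK_ERKPH]);
      ([:: ppERK_ERKPH], [:: ppERK; ERKPH]);
      ([:: ppERK_ERKPH], [:: pERK; ERKPH]);
      ([:: pERK; ERKPH], [:: pERK_ERKPH]);
      ([:: pERK_ERKPH], [:: pERK; ERKPH]);
      ([:: pERK_ERKPH], [:: ERK; ERKPH])
  ].

Definition reaction (r : 'I_30) : seq nat * seq nat :=
  nth ([::], [::]) erk_reactions r.

Definition src (r : 'I_30) (i : 'I_22) : nat := count_mem (i : nat) (reaction r).1.
Definition prd (r : 'I_30) (i : 'I_22) : nat := count_mem (i : nat) (reaction r).2.

Definition rvec (r : 'I_30) : 'rV[Real]_22 :=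
  \row_i ((prd r i)%:R - (src r i)%:R).

(* stoichiometric subspace S = row space of this matrix (rows = reaction vectors) *)
Definition stoich : 'M[Real]_(30, 22) := \matrix_(r < 30) rvec r.

Definition monom (x : 'rV[Real]_22) (r : 'I_30) : Real :=
  \prod_(j < 22) x 0 j ^+ src r j.

Definition massaction (k : 'I_30 -> Real) (x : 'rV[Real]_22) : 'rV[Real]_22 :=
  \sum_(r < 30) (k r * monom x r) *: rvec r.

Definition dmonom (x : 'rV[Real]_22) (r : 'I_30) (j : 'I_22) : Real :=
  (src r j)%:R * x 0 j ^+ (src r j).-1 *
  \prod_(l < 22 | l != j) x 0 l ^+ src r l.

Definition jac (k : 'I_30 -> Real) (x : 'rV[Real]_22) : 'M[Real]_22 :=
  \matrix_(i < 22, j < 22) \sum_(r < 30) k r * dmonom x r j * rvec r 0 i.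

Definition pos_state (x : 'rV[Real]_22) : Prop := forall i, 0 < x 0 i.

Definition steady_state (k : 'I_30 -> Real) (x : 'rV[Real]_22) : Prop :=
  massaction k x = 0.

Definition cplx {m n} (A : 'M[Real]_(m, n)) : 'M[Real[i]]_(m, n) :=
  map_mx (real_complex Real) A.

(* Linear (asymptotic) stability of a steady state for the dynamics restricted
   to its stoichiometric compatibility class: every eigenvalue of the Jacobian
   restricted to S (i.e. every complex eigenvalue of J having an eigenvector in
   the complexification of S) has negative real part. *)
Definition stable (k : 'I_30 -> Real) (x : 'rV[Real]_22) : Prop :=
  forall (lam : Real[i]) (v : 'rV[Real[i]]_22),
    v != 0 -> (v <= cplx stoich)%MS ->
    v *m (cplx (jac k x))^T = lam *: v ->
    complex.Re lam < 0.

From Stdlib Require Import Reals QArith Qabs Qreals.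
From mathcomp Require Import all_boot all_order all_algebra.
From mathcomp Require Import Rstruct complex.
Set Implicit Arguments.
Unset Strict Implicit.
Unset Printing Implicit Defensive.
Import Order.TTheory GRing.Theory Num.Theory.
Local Open Scope ring_scope.

(* The witness is explicit and rational: rate constants k and two positive
   states x, y with y - x in the stoichiometric subspace S, at which the
   mass-action field vanishes exactly.  Stability at each state is certified
   by a Lyapunov matrix P = Z^T D Z + I.  If the rows of W are conservation
   laws (S W^T = 0), then for an eigenvector v of J^T in the complexification
   of S the quadratic forms of W^T W P and (W P)^T W vanish, so
     (lam + lam^* ) v P v^* = - v N v^*,  N := W^T W P + (W P)^T W - (J^T P + P J),
   and Re lam < 0 as soon as N is positive definite.  This holds because N
   turns out to be symmetric and strictly diagonally dominant.  All identities
   and sign conditions are checked by exact rational computation and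
   transported to the reals through [Q2R]. *)

(** * Exact rational arithmetic *)

Definition q0 : Q := Qmake 0 1.
Definition q1 : Q := Qmake 1 1.
Definition qz (q : Q) : bool := if Qnum q is Z0 then true else false.

(* Zero tests exploit the sparsity of the network matrices; [qaddr] and
   [qmulr] normalise with [Qred], which pays off in long sums of fractions. *)
Definition qadd (a b : Q) : Q := if qz a then b else if qz b then a else Qplus a b.
Definition qmul (a b : Q) : Q := if qz a then q0 else if qz b then q0 else Qmult a b.
Definition qaddr (a b : Q) : Q := if qz a then b else if qz b then a else Qred (Qplus a b).
Definition qmulr (a b : Q) : Q := if qz a then q0 else if qz b then q0 else Qred (Qmult a b).

Definition qr (q : Q) : Real := Q2R q.

Lemma qr0 : qr q0 = 0.
Proof. by rewrite /qr /Q2R /= Rmult_0_l. Qed.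

Lemma qr1 : qr q1 = 1.
Proof. by rewrite /qr /Q2R /= Rinv_1 Rmult_1_l. Qed.

Lemma qr_qz q : qz q -> qr q = 0.
Proof. by case: q => [[|p|p] d] //= _; rewrite /qr /Q2R /= Rmult_0_l. Qed.

Lemma qrD a b : qr (Qplus a b) = qr a + qr b.
Proof. exact: Q2R_plus. Qed.

Lemma qrM a b : qr (Qmult a b) = qr a * qr b.
Proof. exact: Q2R_mult. Qed.

Lemma qrN a : qr (Qopp a) = - qr a.
Proof. exact: Q2R_opp. Qed.

Lemma qr_red a : qr (Qred a) = qr a.
Proof. exact/Qeq_eqR/Qred_correct. Qed.

Lemma qr_qadd a b : qr (qadd a b) = qr a + qr b.
Proof.
rewrite /qadd; have [/qr_qz->|_] := boolP (qz a); first by rewrite add0r.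
have [/qr_qz->|_] := boolP (qz b); first by rewrite addr0.
exact: qrD.
Qed.

Lemma qr_qmul a b : qr (qmul a b) = qr a * qr b.
Proof.
rewrite /qmul; have [/qr_qz->|_] := boolP (qz a); first by rewrite mul0r qr0.
have [/qr_qz->|_] := boolP (qz b); first by rewrite mulr0 qr0.
exact: qrM.
Qed.

Lemma qr_qaddr a b : qr (qaddr a b) = qr a + qr b.
Proof.
rewrite /qaddr; have [/qr_qz->|_] := boolP (qz a); first by rewrite add0r.
have [/qr_qz->|_] := boolP (qz b); first by rewrite addr0.
by rewrite qr_red qrD.
Qed.

Lemma qr_qmulr a b : qr (qmulr a b) = qr a * qr b.
Proof.
rewrite /qmulr; have [/qr_qz->|_] := boolP (qz a); first by rewrite mul0r qr0.
have [/qr_qz->|_] := boolP (qz b); first by rewrite mulr0 qr0.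
by rewrite qr_red qrM.
Qed.

Lemma qr_Qeq_bool a b : Qeq_bool a b -> qr a = qr b.
Proof. by move/Qeq_bool_eq; apply: Qeq_eqR. Qed.

Lemma qr_neq a b : Qeq_bool a b = false -> qr a <> qr b.
Proof. by move=> h /eqR_Qeq/Qeq_bool_iff; rewrite h. Qed.

Lemma qr_ge0 a : Qle_bool q0 a -> 0 <= qr a.
Proof. by move/Qle_bool_iff/Qle_Rle; rewrite -qr0 => /RleP. Qed.

Lemma qr_gt0 a : ~~ Qle_bool a q0 -> 0 < qr a.
Proof.
move/negP => h; rewrite -qr0; apply/RltP/Qlt_Rlt/Qnot_le_lt => /Qle_bool_iff.
by move/h.
Qed.

Definition qnat (n : nat) : Q := Qmake (Z.of_nat n) 1.

Lemma qr_nat n : qr (qnat n) = n%:R.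
Proof. by rewrite /qr /qnat /Q2R /= Rinv_1 Rmult_1_r -INR_IZR_INZ INRE. Qed.

Fixpoint qsum (f : nat -> Q) (n : nat) : Q :=
  if n is n'.+1 then qadd (qsum f n') (f n') else q0.
Fixpoint qsumr (f : nat -> Q) (n : nat) : Q :=
  if n is n'.+1 then qaddr (qsumr f n') (f n') else q0.
Fixpoint qprod (f : nat -> Q) (n : nat) : Q :=
  if n is n'.+1 then qmulr (qprod f n') (f n') else q1.
Fixpoint qpow (q : Q) (n : nat) : Q :=
  if n is n'.+1 then qmulr q (qpow q n') else q1.

Lemma qr_sum f n : qr (qsum f n) = \sum_(i < n) qr (f i).
Proof. by elim: n => [|n IH]; rewrite ?big_ord0 ?qr0 // big_ord_recr /= qr_qadd IH. Qed.

Lemma qr_sumr f n : qr (qsumr f n) = \sum_(i < n) qr (f i).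
Proof. by elim: n => [|n IH]; rewrite ?big_ord0 ?qr0 // big_ord_recr /= qr_qaddr IH. Qed.

Lemma qr_prod f n : qr (qprod f n) = \prod_(i < n) qr (f i).
Proof. by elim: n => [|n IH]; rewrite ?big_ord0 ?qr1 // big_ord_recr /= qr_qmulr IH. Qed.

Lemma qr_pow q n : qr (qpow q n) = qr q ^+ n.
Proof. by elim: n => [|n IH]; rewrite ?expr0 ?qr1 // exprS /= qr_qmulr IH. Qed.

Definition allq (f : nat -> bool) (n : nat) : bool := all f (iota 0 n).

Lemma allq_ord {f n} : allq f n -> forall i : 'I_n, f i.
Proof. by move=> /allP h i; apply: h; rewrite mem_iota add0n ltn_ord. Qed.

Definition qmat := seq (seq Q).
Definition mget (M : qmat) (i j : nat) : Q := nth q0 (nth [::] M i) j.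
Definition mat_of (f : nat -> nat -> Q) (m n : nat) : qmat :=
  mkseq (fun i => mkseq (f i) n) m.

(* Rows and columns beyond the stated size are ignored. *)
Definition qlift (m n : nat) (M : qmat) : 'M[Real]_(m, n) :=
  \matrix_(i, j) qr (mget M i j).

Definition qrow (n : nat) (v : seq Q) : 'rV[Real]_n := qlift 1 n [:: v].

Lemma qrowE n v (a : 'I_1) (j : 'I_n) : qrow n v a j = qr (nth q0 v j).
Proof. by rewrite mxE (ord1 a). Qed.

Lemma lift_mat_of f m n : qlift m n (mat_of f m n) = \matrix_(i, j) qr (f i j).
Proof. by apply/matrixP => i j; rewrite !mxE /mget !nth_mkseq. Qed.

Definition qzeros (m n : nat) : qmat := mat_of (fun _ _ => q0) m n.
Definition qtr (m n : nat) (A : qmat) : qmat := mat_of (fun i j => mget A j i) n m.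
Definition qmadd (m n : nat) (A B : qmat) : qmat :=
  mat_of (fun i j => qadd (mget A i j) (mget B i j)) m n.
Definition qmsub (m n : nat) (A B : qmat) : qmat :=
  mat_of (fun i j => qadd (mget A i j) (Qopp (mget B i j))) m n.
Definition qmsubr (m n : nat) (A B : qmat) : qmat :=
  mat_of (fun i j => qaddr (mget A i j) (Qopp (mget B i j))) m n.
Definition qmscale (m n : nat) (c : Q) (A : qmat) : qmat :=
  mat_of (fun i j => qmul c (mget A i j)) m n.
Definition qmm (m p n : nat) (A B : qmat) : qmat :=
  mat_of (fun i j => qsum (fun k => qmul (mget A i k) (mget B k j)) p) m n.
Definition qmmr (m p n : nat) (A B : qmat) : qmat :=
  mat_of (fun i j => qsumr (fun k => qmulr (mget A i k) (mget B k j)) p) m n.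
Definition qdiag (n : nat) (v : seq Q) : qmat :=
  mat_of (fun i j => if i == j then nth q0 v i else q0) n n.
Definition qrowscale (m n : nat) (c : seq Q) (U : qmat) : qmat :=
  mat_of (fun p l => qmul (nth q0 c p) (mget U p l)) m n.
Definition qmeqb (m n : nat) (A B : qmat) : bool :=
  allq (fun i => allq (fun j => Qeq_bool (mget A i j) (mget B i j)) n) m.

Lemma lift_zeros m n : qlift m n (qzeros m n) = 0.
Proof. by rewrite lift_mat_of; apply/matrixP => i j; rewrite !mxE qr0. Qed.

Lemma lift_tr m n A : qlift n m (qtr m n A) = (qlift m n A)^T.
Proof. by rewrite lift_mat_of; apply/matrixP => i j; rewrite !mxE. Qed.

Lemma lift_add m n A B : qlift m n (qmadd m n A B) = qlift m n A + qlift m n B.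
Proof. by rewrite lift_mat_of; apply/matrixP => i j; rewrite !mxE qr_qadd. Qed.

Lemma lift_sub m n A B : qlift m n (qmsub m n A B) = qlift m n A - qlift m n B.
Proof. by rewrite lift_mat_of; apply/matrixP => i j; rewrite !mxE qr_qadd qrN. Qed.

Lemma lift_subr m n A B : qlift m n (qmsubr m n A B) = qlift m n A - qlift m n B.
Proof. by rewrite lift_mat_of; apply/matrixP => i j; rewrite !mxE qr_qaddr qrN. Qed.

Lemma lift_mm m p n A B : qlift m n (qmm m p n A B) = qlift m p A *m qlift p n B.
Proof.
rewrite lift_mat_of; apply/matrixP => i j; rewrite !mxE qr_sum.
by apply: eq_bigr => k _; rewrite qr_qmul !mxE.
Qed.

Lemma lift_mmr m p n A B : qlift m n (qmmr m p n A B) = qlift m p A *m qlift p n B.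
Proof.
rewrite lift_mat_of; apply/matrixP => i j; rewrite !mxE qr_sumr.
by apply: eq_bigr => k _; rewrite qr_qmulr !mxE.
Qed.

Lemma lift_diag n v : qlift n n (qdiag n v) = diag_mx (qrow n v).
Proof.
rewrite lift_mat_of; apply/matrixP => i j; rewrite !mxE.
have [->|ne] := eqVneq i j; first by rewrite eqxx mulr1n.
by rewrite ifN ?mulr0n ?qr0.
Qed.

Lemma lift_rowscale m n c U :
  qlift m n (qrowscale m n c U) = diag_mx (qrow m c) *m qlift m n U.
Proof. by rewrite lift_mat_of mul_diag_mx; apply/matrixP => i j; rewrite !mxE qr_qmul. Qed.

Lemma lift_eqb {m n A B} : qmeqb m n A B -> qlift m n A = qlift m n B.
Proof.
move=> h; apply/matrixP => i j; rewrite !mxE; apply: qr_Qeq_bool.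
by have /allq_ord := allq_ord h i; apply.
Qed.

(** * The network over the rationals *)

Definition srcq (r j : nat) : nat := count_mem j (nth ([::], [::]) erk_reactions r).1.
Definition prdq (r j : nat) : nat := count_mem j (nth ([::], [::]) erk_reactions r).2.

Definition kfun (kq : seq Q) : 'I_30 -> Real := fun r => qr (nth q0 kq r).
Definition xrow (xq : seq Q) : 'rV[Real]_22 := qrow 22 xq.

Definition rvecQ (r i : nat) : Q := qaddr (qnat (prdq r i)) (Qopp (qnat (srcq r i))).
Definition stoichQ : qmat := mat_of rvecQ 30 22.
Definition monomQ (xq : seq Q) (r : nat) : Q :=
  qprod (fun j => qpow (nth q0 xq j) (srcq r j)) 22.
Definition massactionQ (kq xq : seq Q) (i : nat) : Q :=
  qsumr (fun r => qmulr (qmulr (nth q0 kq r) (monomQ xq r)) (rvecQ r i)) 30.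
Definition dmonomQ (xq : seq Q) (r j : nat) : Q :=
  qmulr (qmulr (qnat (srcq r j)) (qpow (nth q0 xq j) (srcq r j).-1))
        (qprod (fun l => if l == j then q1 else qpow (nth q0 xq l) (srcq r l)) 22).
Definition jacQ (kq xq : seq Q) : qmat :=
  mat_of (fun i j =>
    qsumr (fun r => qmulr (qmulr (nth q0 kq r) (dmonomQ xq r j)) (rvecQ r i)) 30) 22 22.

Lemma rvecE (r : 'I_30) (a : 'I_1) (i : 'I_22) : rvec r a i = qr (rvecQ r i).
Proof. by rewrite mxE qr_qaddr qrN !qr_nat. Qed.

Lemma stoichE : stoich = qlift 30 22 stoichQ.
Proof. by rewrite lift_mat_of; apply/matrixP => r i; rewrite !mxE qr_qaddr qrN !qr_nat. Qed.

Lemma monomE xq (r : 'I_30) : monom (xrow xq) r = qr (monomQ xq r).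
Proof. by rewrite qr_prod; apply: eq_bigr => j _; rewrite qr_pow qrowE. Qed.

Lemma massactionE kq xq :
  massaction (kfun kq) (xrow xq) = qrow 22 (mkseq (massactionQ kq xq) 22).
Proof.
apply/matrixP => a i; rewrite /massaction summxE qrowE nth_mkseq // qr_sumr.
by apply: eq_bigr => r _; rewrite mxE 2!qr_qmulr monomE rvecE.
Qed.

Lemma dmonomE xq (r : 'I_30) (j : 'I_22) : dmonom (xrow xq) r j = qr (dmonomQ xq r j).
Proof.
rewrite /dmonom /dmonomQ 2!qr_qmulr qr_prod qr_nat qr_pow qrowE; congr (_ * _).
rewrite big_mkcond /=; apply: eq_bigr => l _.
have [->|ne] := eqVneq l j; first by rewrite eqxx qr1.
by rewrite ifN // qr_pow qrowE.
Qed.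

Lemma jacE kq xq : jac (kfun kq) (xrow xq) = qlift 22 22 (jacQ kq xq).
Proof.
rewrite lift_mat_of; apply/matrixP => i j; rewrite !mxE qr_sumr.
by apply: eq_bigr => r _; rewrite 2!qr_qmulr dmonomE rvecE.
Qed.

(** * Lyapunov certificates for stability *)

Section HermitianForms.
Local Open Scope complex_scope.
Local Notation C := Real[i].

Definition conjmx {m n} (A : 'M[C]_(m, n)) : 'M[C]_(m, n) := map_mx (@conjc Real) A.

Definition hform {n} (A : 'M[Real]_n) (v : 'rV[C]_n) : C :=
  (v *m cplx A *m (conjmx v)^T) 0 0.

Definition posdef {n} (A : 'M[Real]_n) : Prop :=
  forall v : 'rV[C]_n, v != 0 -> 0 < hform A v.

Lemma conjmx_cplx m n (A : 'M[Real]_(m, n)) : conjmx (cplx A) = cplx A.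
Proof. by apply/matrixP => i j; rewrite !mxE conjc_real. Qed.

Lemma conjmxM m n p (A : 'M[C]_(m, n)) (B : 'M[C]_(n, p)) :
  conjmx (A *m B) = conjmx A *m conjmx B.
Proof. exact: map_mxM. Qed.

Lemma conjmxZ m n (a : C) (A : 'M[C]_(m, n)) : conjmx (a *: A) = a^*%C *: conjmx A.
Proof. by apply/matrixP => i j; rewrite !mxE rmorphM. Qed.

Lemma cplxM m n p (A : 'M[Real]_(m, n)) (B : 'M[Real]_(n, p)) :
  cplx (A *m B) = cplx A *m cplx B.
Proof. exact: map_mxM. Qed.

Lemma cplxT m n (A : 'M[Real]_(m, n)) : cplx A^T = (cplx A)^T.
Proof. by rewrite /cplx map_trmx. Qed.

Lemma trmx_conjmx_mul m n (A : 'M[Real]_(m, n)) (v : 'rV[C]_m) :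
  (conjmx (v *m cplx A))^T = (cplx A)^T *m (conjmx v)^T.
Proof. by rewrite conjmxM (conjmx_cplx A) trmx_mul. Qed.

Lemma hformD n (A B : 'M[Real]_n) v : hform (A + B) v = hform A v + hform B v.
Proof. by rewrite /hform /cplx map_mxD mulmxDr mulmxDl mxE. Qed.

Lemma hformB n (A B : 'M[Real]_n) v : hform (A - B) v = hform A v - hform B v.
Proof. by rewrite /hform /cplx map_mxB mulmxBr mulmxBl !mxE. Qed.

Lemma hform_diag n (d : 'rV[Real]_n) (w : 'rV[C]_n) :
  hform (diag_mx d) w = \sum_i (d 0 i)%:C * (w 0 i * (w 0 i)^*%C).
Proof.
rewrite /hform /cplx map_diag_mx mul_mx_diag !mxE; apply: eq_bigr => i _.
by rewrite !mxE mulrCA mulrA.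
Qed.

Lemma hform_diag_ge0 n (d : 'rV[Real]_n) (w : 'rV[C]_n) :
  (forall i, 0 <= d 0 i) -> 0 <= hform (diag_mx d) w.
Proof.
move=> d_ge0; rewrite hform_diag; apply: sumr_ge0 => i _.
by rewrite mulr_ge0 ?mulcJ_ge0 ?lecR.
Qed.

Lemma hform_diag_gt0 n (d : 'rV[Real]_n) (w : 'rV[C]_n) :
  (forall i, 0 < d 0 i) -> w != 0 -> 0 < hform (diag_mx d) w.
Proof.
move=> d_gt0 w_neq0; have [i wi_neq0] : exists i, w 0 i != 0.
  apply/existsP; apply: contraNT w_neq0; rewrite negb_exists => /forallP w0.
  by apply/eqP/matrixP => a j; rewrite (ord1 a) mxE; apply/eqP/negbNE/w0.
rewrite hform_diag (bigD1 i) //=; apply: ltr_pwDl.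
  by rewrite mulr_gt0 ?ltcR //; have := mul_conjC_gt0 (w 0 i); rewrite wi_neq0.
by apply: sumr_ge0 => j _; rewrite mulr_ge0 ?mulcJ_ge0 ?lecR ?ltW.
Qed.

Lemma hform_congr n m (U : 'M[Real]_(m, n)) (A : 'M[Real]_m) v :
  hform (U^T *m A *m U) v = hform A (v *m (cplx U)^T).
Proof.
have UT : conjmx (cplx U)^T = (cplx U)^T by rewrite -cplxT conjmx_cplx.
by rewrite /hform !cplxM cplxT conjmxM UT trmx_mul trmxK !mulmxA.
Qed.

Lemma sos_posdef m n (U : 'M[Real]_(m, n)) (c : 'rV[Real]_m) (r : 'rV[Real]_n) :
  (forall i, 0 <= c 0 i) -> (forall i, 0 < r 0 i) ->
  posdef (U^T *m diag_mx c *m U + diag_mx r).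
Proof.
move=> c_ge0 r_gt0 v v_neq0; rewrite hformD hform_congr.
by apply: ltr_wpDl; [apply: hform_diag_ge0 | apply: hform_diag_gt0].
Qed.

Lemma hform_mull_eq0 n p (W : 'M[Real]_(p, n)) (A : 'M[Real]_(p, n)) v :
  v *m (cplx W)^T = 0 -> hform (W^T *m A) v = 0.
Proof. by move=> vW0; rewrite /hform cplxM cplxT mulmxA vW0 !mul0mx mxE. Qed.

Lemma hform_mulr_eq0 n p (W : 'M[Real]_(p, n)) (A : 'M[Real]_(n, p)) v :
  v *m (cplx W)^T = 0 -> hform (A *m W) v = 0.
Proof.
move=> vW0; have Wv0 : cplx W *m (conjmx v)^T = 0.
  rewrite -[cplx W]trmxK -cplxT -trmx_conjmx_mul cplxT vW0.
  by apply/matrixP => i j; rewrite !mxE conjc0.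
by rewrite /hform cplxM mulmxA -(mulmxA _ (cplx W)) Wv0 mulmx0 mxE.
Qed.

Lemma hform_eigenl n (J P : 'M[Real]_n) v lam :
  v *m (cplx J)^T = lam *: v -> hform (J^T *m P) v = lam * hform P v.
Proof. by move=> h; rewrite /hform cplxM cplxT mulmxA h -!scalemxAl mxE. Qed.

Lemma hform_eigenr n (J P : 'M[Real]_n) v lam :
  v *m (cplx J)^T = lam *: v -> hform (P *m J) v = lam^*%C * hform P v.
Proof.
move=> eigen; have h : cplx J *m (conjmx v)^T = lam^*%C *: (conjmx v)^T.
  by rewrite -[cplx J]trmxK -cplxT -trmx_conjmx_mul cplxT eigen conjmxZ linearZ.
by rewrite /hform cplxM !mulmxA -(mulmxA _ (cplx J)) h -scalemxAr mxE.
Qed.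

Lemma lyapunov_Re_lt0 m n p (S : 'M[Real]_(m, n)) (W : 'M[Real]_(p, n))
    (J P : 'M[Real]_n) (lam : C) (v : 'rV[C]_n) :
  S *m W^T = 0 -> posdef P ->
  posdef (W^T *m (W *m P) + (W *m P)^T *m W - (J^T *m P + P *m J)) ->
  v != 0 -> (v <= cplx S)%MS -> v *m (cplx J)^T = lam *: v ->
  complex.Re lam < 0.
Proof.
move=> SW0 P_pd N_pd v_neq0 /submxP [w def_v] eigen.
have vW0 : v *m (cplx W)^T = 0.
  by rewrite def_v -cplxT -mulmxA -cplxM SW0 /cplx map_mx0 mulmx0.
have := N_pd _ v_neq0.
rewrite hformB !hformD hform_mull_eq0 // hform_mulr_eq0 // add0r.
rewrite (hform_eigenl P eigen) (hform_eigenr P eigen) sub0r oppr_gt0 -mulrDl.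
have -> : lam + lam^*%C = (complex.Re lam)%:C * 2%:R.
  by rewrite ReJ_add mulfVK // pnatr_eq0.
by rewrite -mulrA pmulr_llt0 ?ltcR // mulr_gt0 ?ltr0n ?P_pd.
Qed.

End HermitianForms.

Definition conservation_laws : seq (seq nat) :=
  [:: [:: RAS; RAS_RAF];
      [:: RAFPH; RAF_RAFPH];
      [:: MEKPH; ppMEK_MEKPH; pMEK_MEKPH];
      [:: ERKPH; ppERK_ERKPH; pERK_ERKPH];
      [:: RAF; pRAF; RAS_RAF; MEK_pRAF; pMEK_pRAF; RAF_RAFPH];
      [:: MEK; pMEK; ppMEK; MEK_pRAF; pMEK_pRAF; ERK_ppMEK; pERK_ppMEK;
          ppMEK_MEKPH; pMEK_MEKPH];
      [:: ERK; pERK; ppERK; ERK_ppMEK; pERK_ppMEK; ppERK_ERKPH; pERK_ERKPH]].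

(* The large weight lets the W-terms of N, which vanish on S, dominate N
   transversally to S. *)
Definition WQ : qmat :=
  qmscale 7 22 (Qmake 186284361192885745740981673767779210967320109515115 1)
    [seq mkseq (fun j => if j \in l then q1 else q0) 22 | l <- conservation_laws].

Lemma stoich_mul_trW : stoich *m (qlift 7 22 WQ)^T = 0.
Proof.
have conserved : qmeqb 30 7 (qmm 30 22 7 stoichQ (qtr 7 22 WQ)) (qzeros 30 7).
  by vm_compute.
by rewrite stoichE -lift_tr -lift_mm (lift_eqb conserved) lift_zeros.
Qed.

Definition qnonneg (l : seq Q) (n : nat) : bool := allq (fun i => Qle_bool q0 (nth q0 l i)) n.
Definition qpos (l : seq Q) (n : nat) : bool := allq (fun i => ~~ Qle_bool (nth q0 l i) q0) n.

Lemma qnonneg_ge0 l n : qnonneg l n -> forall i, 0 <= qrow n l 0 i.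
Proof. by move=> h i; rewrite qrowE qr_ge0 ?(allq_ord h). Qed.

Lemma qpos_gt0 l n : qpos l n -> forall i, 0 < qrow n l 0 i.
Proof. by move=> h i; rewrite qrowE qr_gt0 ?(allq_ord h). Qed.

Definition qsgn (q : Q) : Q := if Qle_bool q0 q then q1 else Qopp q1.

Definition offdiag_pairs : seq (nat * nat) :=
  flatten [seq [seq (i, j) | j <- iota i.+1 (21 - i)] | i <- iota 0 22].

(* For symmetric N, N = sum_(i < j) |N_ij| u u^T + diag(margins) with
   u = e_i + sgn(N_ij) e_j; the margins are positive exactly when N is
   strictly diagonally dominant. *)
Definition dd_vectors (N : qmat) : qmat :=
  [seq mkseq (fun l => if l == p.1 then q1
                       else if l == p.2 then qsgn (mget N p.1 p.2) else q0) 22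
  | p <- offdiag_pairs].
Definition dd_weights (N : qmat) : seq Q := [seq Qabs (mget N p.1 p.2) | p <- offdiag_pairs].
Definition dd_margins (N : qmat) : seq Q :=
  mkseq (fun i => qadd (mget N i i)
    (Qopp (qsum (fun j => if j == i then q0 else Qabs (mget N i j)) 22))) 22.
Definition dd_sos (N : qmat) : qmat :=
  qmadd 22 22 (qmm 22 (size offdiag_pairs) 22 (qtr (size offdiag_pairs) 22 (dd_vectors N))
                             (qrowscale (size offdiag_pairs) 22 (dd_weights N) (dd_vectors N)))
              (qdiag 22 (dd_margins N)).

Lemma dd_weights_ge0 N i : 0 <= qrow (size offdiag_pairs) (dd_weights N) 0 i.
Proof.
rewrite qrowE; have [lt_i|le_i] := ltnP i (size (dd_weights N)).
  by rewrite (nth_map (0, 0)%N) -?(size_map (fun p => Qabs (mget N p.1 p.2))) //;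
     apply/qr_ge0/Qle_bool_iff/Qabs_nonneg.
by rewrite nth_default // qr0.
Qed.

Lemma dd_sos_posdef N : qpos (dd_margins N) 22 -> posdef (qlift 22 22 (dd_sos N)).
Proof.
move=> margins_gt0; rewrite lift_add lift_mm lift_rowscale lift_tr lift_diag mulmxA.
exact: sos_posdef (@dd_weights_ge0 N) (qpos_gt0 margins_gt0).
Qed.

Definition lyapunov_matrixQ (Z : qmat) (D : seq Q) : qmat :=
  qmadd 22 22 (qmm 22 22 22 (qtr 22 22 Z) (qrowscale 22 22 D Z)) (qdiag 22 (nseq 22 q1)).

Definition lyapunov_residualQ (JQ PQ : qmat) : qmat :=
  qmsub 22 22 (qmadd 22 22 (qmm 22 7 22 (qtr 7 22 WQ) (qmm 7 22 22 WQ PQ))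
                           (qmm 22 7 22 (qtr 7 22 (qmm 7 22 22 WQ PQ)) WQ))
              (qmadd 22 22 (qmm 22 22 22 (qtr 22 22 JQ) PQ) (qmm 22 22 22 PQ JQ)).

Lemma lift_residual JQ PQ :
  let W := qlift 7 22 WQ in let J := qlift 22 22 JQ in let P := qlift 22 22 PQ in
  qlift 22 22 (lyapunov_residualQ JQ PQ)
  = W^T *m (W *m P) + (W *m P)^T *m W - (J^T *m P + P *m J).
Proof. by rewrite /= lift_sub !lift_add !lift_mm !lift_tr lift_mm. Qed.

Definition lyapunov_check (kq xq : seq Q) (Z : qmat) (D : seq Q) : bool :=
  let N := lyapunov_residualQ (jacQ kq xq) (lyapunov_matrixQ Z D) in
  [&& qnonneg D 22, qmeqb 22 22 N (dd_sos N) & qpos (dd_margins N) 22].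

Lemma lyapunov_matrix_posdef Z D : qnonneg D 22 -> posdef (qlift 22 22 (lyapunov_matrixQ Z D)).
Proof.
move=> D_ge0; rewrite lift_add lift_mm lift_rowscale lift_tr lift_diag mulmxA.
apply: sos_posdef (qnonneg_ge0 D_ge0) _ => i.
by rewrite qrowE nth_nseq ltn_ord qr1 ltr01.
Qed.

Lemma stable_of_lyapunov_check kq xq Z D : lyapunov_check kq xq Z D -> stable (kfun kq) (xrow xq).
Proof.
case/and3P => D_ge0 /lift_eqb N_sos margins_gt0 lam v v_neq0 v_S eigen.
apply: (lyapunov_Re_lt0 stoich_mul_trW (lyapunov_matrix_posdef Z D_ge0) _ v_neq0 v_S eigen).
by rewrite jacE -lift_residual N_sos; apply: dd_sos_posdef.
Qed.

Definition kQ : seq Q := [:: Qmake 34471076754723434733231115838543774546110376176879788591633112091380059769482061254974767104000000 1; Qmake 59736809148810497691110740515658245662293549624706451820727836294721126305068344788450590720000000 1; Qmake 26440882737998089141967049080701190702982390817493019658354943933729023118636808348986327040000000 1; Qmake 215848604013367268042865146673992207006833345971364596131131527315085401703203738038045171712000000 1; Qmake 195858390651837697347904067264453264466536228277726071543369955064659430508420802585083904000000 1; Qmake 9065445510170773420102988256240408241022533994569035311435980777278522212104048576795312128000000000 1; Qmake 344123192375278834240267446183644385667704153083964707701701011048606619403295350141992419328000 1; Qmake 176272551586653927613113660538007938019882605449953464389032959558193487457578722326575513600000 1; Qmake 69529728681402382558505943878880908885620361038592755397896334047954097830489384917704785920000 1; Qmake 6637571462334990593399154926393874613246378710375972065441992493557709795027677018744651776000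 1; Qmake 16647963205406204274571845717478527479655579403606716081186446180496051593215768219732131840000 1; Qmake 33295926410812408549143691434957054959311158807213432162372892360992103186431536439464263680000 1; Qmake 319728690962277005749692180248765139542312935235017997254541734148155538178256382384141500416000 1; Qmake 881362757933269638065568302690039690099413027249767321945164797790967437287893611632877568000000 1; Qmake 51651710858204690815903402699242489559092359244251976416123446999904564981782134848594073600000 1; Qmake 3492327921549311882857848258208082105377576129216806790387295154645581757227356222564915200000000 1; Qmake 1762725515866539276131136605380079380198826054499534643890329595581934874575787223265755136000000 1; Qmake 75341811264677504320362477887332254210424539825100508945088906863108155543873946505252864000000 1; Qmake 12721002472836858442746369168826239527101528026638308346741878581449630011521931127901199564800000 1; Qmake 31337342504294031575664650762312522314645796524436171446939192810345508881347328413613424640000 1; Qmake 1664796320540620427457184571747852747965557940360671608118644618049605159321576821973213184000000 1; Qmake 172189669275534152487369235072341804263084494685197848696258621362750211740289496705613168640000000 7; Qmake 6169539305532887466458978118830277830695891190748371253616153584536772061015255281430142976000000 1; Qmake 19585839065183769734790406726445326446653622827772607154336995506465943050842080258508390400000 1; Qmake 2126341838708243258415753353512922571945210900108777579962027416096334255316148170467031121920000 7; Qmake 1077221148585107335413472369954492954565949255527493393488534752855626867796314414217961472000000 1; Qmake 135072493121222348276536564105895905229997975883167313470928710244039900078051539783680000000000 1; Qmake 347018632250415168199393961311370553094067780325337091459350496884312501317644837673541909708800000 1; Qmake 18606547111924581248050886390123060124320941686383976796620145731142645898299976245582970880000000 1; Qmake 34683256677929592238691345244746932249282457090847325169138429542700107485866183791108608000000000000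 1].
Definition xQ : seq Q := [:: Qmake 50 1; Qmake 245 2; Qmake 10 1; Qmake 833 12; Qmake 204085 1152; Qmake 51 100; Qmake 297381 2560000; Qmake 13294219351 7864320000; Qmake 11 1; Qmake 11 50; Qmake 12 1; Qmake 28 1; Qmake 220 1; Qmake 1715 1; Qmake 25897957 22916; Qmake 693889 1024; Qmake 919803038657513425143761550257 11245614543041155286959226880; Qmake 77 120; Qmake 20868052 28645; Qmake 15827 10; Qmake 185241210011299409095653092628543 15618909087557160120776704000000; Qmake 2081667 64000000].
Definition yQ : seq Q := [:: Qmake 14 1; Qmake 2401 29; Qmake 13 1; Qmake 75803 580; Qmake 26000429 53824; Qmake 7526244438693038869 2632796553543265382400; Qmake 33240289479341465926223 234026360314956922880000; Qmake 2839717298654641326589378291763 6298117408796120708546560000; Qmake 35 1; Qmake 29 100; Qmake 28 5; Qmake 7 20; Qmake 196 1; Qmake 218491 145; Qmake 11946102441 8307050; Qmake 232682026355390261483561 22466530590235864596480; Qmake 196474913740186612667518306786917627924020213194741 720481371318952758700323143554545326176744243200; Qmake 343 600; Qmake 19251857352 20767625; Qmake 10081799 7250; Qmake 141148131991540842995598740812242219453095159011497 3569566841651569355431644587567109226004480000000; Qmake 232682026355390261483561 468052720629913845760000000].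
Definition cQ : seq Q := [:: Qmake 36 1; Qmake 0 1; Qmake 60 1; Qmake (-7) 100; Qmake 0 1; Qmake 0 1; Qmake (-3) 1; Qmake 0 1; Qmake 29749 145; Qmake 3653939 10875; Qmake 0 1; Qmake 1220261 43500; Qmake 719588 3625; Qmake 0 1; Qmake 0 1; Qmake (-696388) 3625; Qmake 0 1; Qmake 0 1; Qmake 267039999573674461231 526559310708653076480; Qmake 0 1; Qmake 9001569846883766273958145 13479918354141518757888; Qmake 2813016512739823015555041741971 4212474485669224611840000000; Qmake 0 1; Qmake 563140374498477094884184556995037 1180897014149272632852480000000; Qmake 12956648948121942302276917719 468052720629913845760000000; Qmake 0 1; Qmake 0 1; Qmake (-14991222704824467012917719) 468052720629913845760000000; Qmake 0 1; Qmake 0 1].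
Definition ZxQ : qmat := [:: [:: Qmake 1073741824 1; Qmake 1061033929 1; Qmake (-4232265253) 1; Qmake (-1229825496) 1; Qmake 3598210148 1; Qmake (-1460855177) 1; Qmake (-1459208658) 1; Qmake (-652905553) 1; Qmake (-536708845) 1; Qmake (-530902313) 1; Qmake (-788729084) 1; Qmake 707022986 1; Qmake 536693268 1; Qmake (-3170053112) 1; Qmake (-34779583) 1; Qmake 2137339706 1; Qmake 2142653439 1; Qmake 533369377 1; Qmake 2808284481 1; Qmake (-2019563503) 1; Qmake 46803196 1; Qmake (-753828113) 1];
  [:: Qmake 0 1; Qmake 1073741824 1; Qmake (-3468699181) 1; Qmake (-1390775783) 1; Qmake 2445455423 1; Qmake (-728132145) 1; Qmake (-732705053) 1; Qmake (-1281962444) 1; Qmake (-9349185) 1; Qmake (-504175727) 1; Qmake (-373781817) 1; Qmake 676866315 1; Qmake 10245738 1; Qmake (-2482442301) 1; Qmake 1103042714 1; Qmake 1717176606 1; Qmake 1702477341 1; Qmake 295357482 1; Qmake 2160712890 1; Qmake (-1786942202) 1; Qmake (-625597163) 1; Qmake (-51263700) 1];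
  [:: Qmake 0 1; Qmake 0 1; Qmake 1073741824 1; Qmake (-416988496) 1; Qmake (-465052640) 1; Qmake 523753684 1; Qmake 522181390 1; Qmake (-1002481623) 1; Qmake 12981 1; Qmake 5708 1; Qmake 304173878 1; Qmake 155881598 1; Qmake (-16027) 1; Qmake 1060928989 1; Qmake (-1060897903) 1; Qmake 58762280 1; Qmake 53668191 1; Qmake (-10035) 1; Qmake (-201557078) 1; Qmake (-102610411) 1; Qmake (-835508435) 1; Qmake 679628585 1];
  [:: Qmake 0 1; Qmake 0 1; Qmake 0 1; Qmake 1073741824 1; Qmake (-131544143) 1; Qmake (-501328927) 1; Qmake (-493698840) 1; Qmake 1799689087 1; Qmake (-14154) 1; Qmake 5647 1; Qmake (-298776590) 1; Qmake (-436330833) 1; Qmake 13014 1; Qmake (-10437699) 1; Qmake 10437132 1; Qmake (-632779039) 1; Qmake (-608199816) 1; Qmake (-8654) 1; Qmake (-489587117) 1; Qmake 788365203 1; Qmake 1373974733 1; Qmake (-937653286) 1];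
  [:: Qmake 0 1; Qmake 0 1; Qmake 0 1; Qmake 0 1; Qmake 1073741824 1; Qmake (-1807785304) 1; Qmake (-1795229668) 1; Qmake 4228869155 1; Qmake (-22711) 1; Qmake (-671) 1; Qmake (-354039450) 1; Qmake (-801898662) 1; Qmake 25206 1; Qmake 887572 1; Qmake (-918565) 1; Qmake (-734138394) 1; Qmake (-693603783) 1; Qmake 2907 1; Qmake 705187129 1; Qmake (-351151886) 1; Qmake 3411539570 1; Qmake (-2609656789) 1];
  [:: Qmake 0 1; Qmake 0 1; Qmake 0 1; Qmake 0 1; Qmake 0 1; Qmake 1073741824 1; Qmake 423366507 1; Qmake (-997293728) 1; Qmake (-1805096) 1; Qmake (-59031) 1; Qmake 36029368 1; Qmake 539705643 1; Qmake 2003750 1; Qmake 3019745 1; Qmake (-5493170) 1; Qmake 1064427130 1; Qmake (-1025439386) 1; Qmake 238413 1; Qmake (-74630155) 1; Qmake 38375864 1; Qmake (-2151407176) 1; Qmake 1612366805 1];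
  [:: Qmake 0 1; Qmake 0 1; Qmake 0 1; Qmake 0 1; Qmake 0 1; Qmake 0 1; Qmake 1073741824 1; Qmake (-3772055094) 1; Qmake (-53476547) 1; Qmake (-1692850) 1; Qmake 2744339367 1; Qmake 145290794 1; Qmake 59571770 1; Qmake 216052015 1; Qmake (-290172615) 1; Qmake (-284503264) 1; Qmake 3119779825 1; Qmake 7225715 1; Qmake (-6801185507) 1; Qmake 4048947121 1; Qmake (-329014698) 1; Qmake 179833325 1];
  [:: Qmake 0 1; Qmake 0 1; Qmake 0 1; Qmake 0 1; Qmake 0 1; Qmake 0 1; Qmake 0 1; Qmake 1073741824 1; Qmake 1378492 1; Qmake 104474 1; Qmake (-93527244) 1; Qmake 979681535 1; Qmake (-1413642) 1; Qmake (-11029978) 1; Qmake 12505986 1; Qmake (-36660971) 1; Qmake (-57682311) 1; Qmake (-129871) 1; Qmake 248000032 1; Qmake (-154701784) 1; Qmake (-1965186903) 1; Qmake 984582708 1];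
  [:: Qmake 0 1; Qmake 0 1; Qmake 0 1; Qmake 0 1; Qmake 0 1; Qmake 0 1; Qmake 0 1; Qmake 0 1; Qmake 1073741824 1; Qmake (-529417) 1; Qmake 894297398 1; Qmake (-201162995) 1; Qmake (-1078801845) 1; Qmake (-27493938) 1; Qmake 1125579698 1; Qmake (-94580210) 1; Qmake (-108170596) 1; Qmake (-11912679) 1; Qmake (-2195841115) 1; Qmake 1300701892 1; Qmake 390505424 1; Qmake (-190825105) 1];
  [:: Qmake 0 1; Qmake 0 1; Qmake 0 1; Qmake 0 1; Qmake 0 1; Qmake 0 1; Qmake 0 1; Qmake 0 1; Qmake 0 1; Qmake 1073741824 1; Qmake 468961287 1; Qmake (-186242537) 1; Qmake (-24464101) 1; Qmake (-621263690) 1; Qmake 1246876319 1; Qmake (-78175468) 1; Qmake (-103120887) 1; Qmake (-514058331) 1; Qmake (-1100272904) 1; Qmake 638330603 1; Qmake 358696765 1; Qmake (-175962124) 1];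
  [:: Qmake 0 1; Qmake 0 1; Qmake 0 1; Qmake 0 1; Qmake 0 1; Qmake 0 1; Qmake 0 1; Qmake 0 1; Qmake 0 1; Qmake 0 1; Qmake 1073741824 1; Qmake 999589360 1; Qmake (-10474102) 1; Qmake 76634068 1; Qmake (-43770630) 1; Qmake 453798450 1; Qmake 560634442 1; Qmake (-10563762) 1; Qmake (-2726087315) 1; Qmake 1664566004 1; Qmake (-1940201234) 1; Qmake 945721742 1];
  [:: Qmake 0 1; Qmake 0 1; Qmake 0 1; Qmake 0 1; Qmake 0 1; Qmake 0 1; Qmake 0 1; Qmake 0 1; Qmake 0 1; Qmake 0 1; Qmake 0 1; Qmake 1073741824 1; Qmake 153543157 1; Qmake 248853760 1; Qmake (-719746059) 1; Qmake 313522455 1; Qmake 441374626 1; Qmake 160350574 1; Qmake 13006933 1; Qmake (-155022376) 1; Qmake (-1856822187) 1; Qmake 963962663 1];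
  [:: Qmake 0 1; Qmake 0 1; Qmake 0 1; Qmake 0 1; Qmake 0 1; Qmake 0 1; Qmake 0 1; Qmake 0 1; Qmake 0 1; Qmake 0 1; Qmake 0 1; Qmake 0 1; Qmake 1073741824 1; Qmake (-119155568) 1; Qmake (-617923915) 1; Qmake 213353524 1; Qmake 169491947 1; Qmake (-154412283) 1; Qmake (-49978926) 1; Qmake 226542492 1; Qmake (-263396425) 1; Qmake 61940329 1];
  [:: Qmake 0 1; Qmake 0 1; Qmake 0 1; Qmake 0 1; Qmake 0 1; Qmake 0 1; Qmake 0 1; Qmake 0 1; Qmake 0 1; Qmake 0 1; Qmake 0 1; Qmake 0 1; Qmake 0 1; Qmake 1073741824 1; Qmake (-1073800000) 1; Qmake 201818 1; Qmake (-46476) 1; Qmake 106396 1; Qmake (-9123433) 1; Qmake 9109822 1; Qmake (-158561) 1; Qmake 58811 1];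
  [:: Qmake 0 1; Qmake 0 1; Qmake 0 1; Qmake 0 1; Qmake 0 1; Qmake 0 1; Qmake 0 1; Qmake 0 1; Qmake 0 1; Qmake 0 1; Qmake 0 1; Qmake 0 1; Qmake 0 1; Qmake 0 1; Qmake 1073741824 1; Qmake (-324093142) 1; Qmake (-241466876) 1; Qmake (-521764407) 1; Qmake 61996503 1; Qmake (-318789493) 1; Qmake 395537876 1; Qmake (-96092268) 1];
  [:: Qmake 0 1; Qmake 0 1; Qmake 0 1; Qmake 0 1; Qmake 0 1; Qmake 0 1; Qmake 0 1; Qmake 0 1; Qmake 0 1; Qmake 0 1; Qmake 0 1; Qmake 0 1; Qmake 0 1; Qmake 0 1; Qmake 0 1; Qmake 1073741824 1; Qmake (-1039885431) 1; Qmake (-209994) 1; Qmake (-60031598) 1; Qmake 43840307 1; Qmake (-144414068) 1; Qmake 107111142 1];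
  [:: Qmake 0 1; Qmake 0 1; Qmake 0 1; Qmake 0 1; Qmake 0 1; Qmake 0 1; Qmake 0 1; Qmake 0 1; Qmake 0 1; Qmake 0 1; Qmake 0 1; Qmake 0 1; Qmake 0 1; Qmake 0 1; Qmake 0 1; Qmake 0 1; Qmake 1073741824 1; Qmake 5874703 1; Qmake (-36563388) 1; Qmake (-501886517) 1; Qmake (-698690051) 1; Qmake 140252215 1];
  [:: Qmake 0 1; Qmake 0 1; Qmake 0 1; Qmake 0 1; Qmake 0 1; Qmake 0 1; Qmake 0 1; Qmake 0 1; Qmake 0 1; Qmake 0 1; Qmake 0 1; Qmake 0 1; Qmake 0 1; Qmake 0 1; Qmake 0 1; Qmake 0 1; Qmake 0 1; Qmake 1073741824 1; Qmake (-80772573) 1; Qmake 85828851 1; Qmake 1559822 1; Qmake (-2523797) 1];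
  [:: Qmake 0 1; Qmake 0 1; Qmake 0 1; Qmake 0 1; Qmake 0 1; Qmake 0 1; Qmake 0 1; Qmake 0 1; Qmake 0 1; Qmake 0 1; Qmake 0 1; Qmake 0 1; Qmake 0 1; Qmake 0 1; Qmake 0 1; Qmake 0 1; Qmake 0 1; Qmake 0 1; Qmake 1073741824 1; Qmake (-1073436678) 1; Qmake (-128846) 1; Qmake 88404 1];
  [:: Qmake 0 1; Qmake 0 1; Qmake 0 1; Qmake 0 1; Qmake 0 1; Qmake 0 1; Qmake 0 1; Qmake 0 1; Qmake 0 1; Qmake 0 1; Qmake 0 1; Qmake 0 1; Qmake 0 1; Qmake 0 1; Qmake 0 1; Qmake 0 1; Qmake 0 1; Qmake 0 1; Qmake 0 1; Qmake 1073741824 1; Qmake (-12835588) 1; Qmake 11470832 1];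
  [:: Qmake 0 1; Qmake 0 1; Qmake 0 1; Qmake 0 1; Qmake 0 1; Qmake 0 1; Qmake 0 1; Qmake 0 1; Qmake 0 1; Qmake 0 1; Qmake 0 1; Qmake 0 1; Qmake 0 1; Qmake 0 1; Qmake 0 1; Qmake 0 1; Qmake 0 1; Qmake 0 1; Qmake 0 1; Qmake 0 1; Qmake 1073741824 1; Qmake (-817181432) 1];
  [:: Qmake 0 1; Qmake 0 1; Qmake 0 1; Qmake 0 1; Qmake 0 1; Qmake 0 1; Qmake 0 1; Qmake 0 1; Qmake 0 1; Qmake 0 1; Qmake 0 1; Qmake 0 1; Qmake 0 1; Qmake 0 1; Qmake 0 1; Qmake 0 1; Qmake 0 1; Qmake 0 1; Qmake 0 1; Qmake 0 1; Qmake 0 1; Qmake 1073741824 1]].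
Definition DxQ : seq Q := [:: Qmake 61229795940626 1; Qmake 1978106817835 1; Qmake 110935787539656 1; Qmake 76982497699261 1; Qmake 138819332909110 1; Qmake 1921368634707 1; Qmake 38999701342 1; Qmake 540686101278 1; Qmake 6044742683 1; Qmake 387928328 1; Qmake 53064813208 1; Qmake 3788838846 1; Qmake 471394408 1; Qmake 1136616715934 1; Qmake 752240208 1; Qmake 11236958637 1; Qmake 546229682 1; Qmake 243675267 1; Qmake 282753083841 1; Qmake 268669084 1; Qmake 1904840448 1; Qmake 185620185 1].
Definition ZyQ : qmat := [:: [:: Qmake 1073741824 1; Qmake 1068214064 1; Qmake (-4270192871) 1; Qmake (-1166879395) 1; Qmake 3698027588 1; Qmake (-1653955868) 1; Qmake (-1631756028) 1; Qmake (-206812611) 1; Qmake (-536806303) 1; Qmake (-534555923) 1; Qmake (-842744331) 1; Qmake 618043006 1; Qmake 536801380 1; Qmake (-3200815845) 1; Qmake (-13447523) 1; Qmake 2044073906 1; Qmake 2066499185 1; Qmake 535510316 1; Qmake 2851901626 1; Qmake (-2009165640) 1; Qmake 417847156 1; Qmake (-1035895687) 1];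
  [:: Qmake 0 1; Qmake 1073741824 1; Qmake (-3541560282) 1; Qmake (-1350397920) 1; Qmake 2738128745 1; Qmake (-1238376269) 1; Qmake (-1226942539) 1; Qmake (-100413164) 1; Qmake (-7364282) 1; Qmake (-449118003) 1; Qmake (-487403188) 1; Qmake 445257375 1; Qmake 7838065 1; Qmake (-2632342022) 1; Qmake 1287721668 1; Qmake 1499720874 1; Qmake 1511286977 1; Qmake 263081126 1; Qmake 2364168936 1; Qmake (-1876754371) 1; Qmake 347834178 1; Qmake (-793102661) 1];
  [:: Qmake 0 1; Qmake 0 1; Qmake 1073741824 1; Qmake (-511012191) 1; Qmake (-350656646) 1; Qmake 396731532 1; Qmake 389827522 1; Qmake (-752680461) 1; Qmake 74000 1; Qmake 7099 1; Qmake 297350035 1; Qmake 119068302 1; Qmake (-75683) 1; Qmake 1059460850 1; Qmake (-1059375564) 1; Qmake 46082308 1; Qmake 39104068 1; Qmake (-7788) 1; Qmake (-99418991) 1; Qmake (-197927842) 1; Qmake (-634854026) 1; Qmake 515790133 1];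
  [:: Qmake 0 1; Qmake 0 1; Qmake 0 1; Qmake 1073741824 1; Qmake (-404868693) 1; Qmake (-38160277) 1; Qmake (-31725846) 1; Qmake 721227868 1; Qmake 92021 1; Qmake 8642 1; Qmake (-210552399) 1; Qmake (-228186551) 1; Qmake (-93183) 1; Qmake (-12220034) 1; Qmake 12321233 1; Qmake (-443006458) 1; Qmake (-436517151) 1; Qmake (-7647) 1; Qmake (-670604337) 1; Qmake 881153692 1; Qmake 494528096 1; Qmake (-266344447) 1];
  [:: Qmake 0 1; Qmake 0 1; Qmake 0 1; Qmake 0 1; Qmake 1073741824 1; Qmake (-1809552080) 1; Qmake (-1766049529) 1; Qmake 4202587693 1; Qmake (-35679) 1; Qmake (-1463) 1; Qmake (-354050147) 1; Qmake (-800771862) 1; Qmake 37626 1; Qmake (-251900) 1; Qmake 207570 1; Qmake (-735852441) 1; Qmake (-691884681) 1; Qmake 3525 1; Qmake 702775898 1; Qmake (-348731280) 1; Qmake 3411016583 1; Qmake (-2610269119) 1];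
  [:: Qmake 0 1; Qmake 0 1; Qmake 0 1; Qmake 0 1; Qmake 0 1; Qmake 1073741824 1; Qmake (-1019841053) 1; Qmake (-146711025) 1; Qmake (-751337) 1; Qmake (-35678) 1; Qmake 28681850 1; Qmake (-62770822) 1; Qmake 791857 1; Qmake 2245257 1; Qmake (-3182269) 1; Qmake 1071814021 1; Qmake (-1042021722) 1; Qmake 78830 1; Qmake (-92209831) 1; Qmake 63443585 1; Qmake (-947033899) 1; Qmake 1009907464 1];
  [:: Qmake 0 1; Qmake 0 1; Qmake 0 1; Qmake 0 1; Qmake 0 1; Qmake 0 1; Qmake 1073741824 1; Qmake (-1668158737) 1; Qmake (-24913452) 1; Qmake (-1185844) 1; Qmake 980432068 1; Qmake 427230886 1; Qmake 26264940 1; Qmake 97624712 1; Qmake (-128734847) 1; Qmake (-41965593) 1; Qmake 1059331706 1; Qmake 2625787 1; Qmake (-3163479531) 1; Qmake 2180227722 1; Qmake (-857678370) 1; Qmake 431392314 1];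
  [:: Qmake 0 1; Qmake 0 1; Qmake 0 1; Qmake 0 1; Qmake 0 1; Qmake 0 1; Qmake 0 1; Qmake 1073741824 1; Qmake 9762493 1; Qmake 900426 1; Qmake (-337546437) 1; Qmake 724343654 1; Qmake (-9614478) 1; Qmake (-42178842) 1; Qmake 51964782 1; Qmake (-214748705) 1; Qmake (-127912237) 1; Qmake (-830902) 1; Qmake 1153204851 1; Qmake (-817334658) 1; Qmake (-1467878680) 1; Qmake 735159674 1];
  [:: Qmake 0 1; Qmake 0 1; Qmake 0 1; Qmake 0 1; Qmake 0 1; Qmake 0 1; Qmake 0 1; Qmake 0 1; Qmake 1073741824 1; Qmake 970524 1; Qmake 952277300 1; Qmake (-47259080) 1; Qmake (-1041035948) 1; Qmake 113361002 1; Qmake 904724589 1; Qmake (-33659203) 1; Qmake (-20378798) 1; Qmake 7609015 1; Qmake (-3071308747) 1; Qmake 2113856809 1; Qmake 93146311 1; Qmake (-43779236) 1];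
  [:: Qmake 0 1; Qmake 0 1; Qmake 0 1; Qmake 0 1; Qmake 0 1; Qmake 0 1; Qmake 0 1; Qmake 0 1; Qmake 0 1; Qmake 1073741824 1; Qmake 719507380 1; Qmake (-74133158) 1; Qmake (-32495926) 1; Qmake (-536319907) 1; Qmake 1295736330 1; Qmake (-41983904) 1; Qmake (-27381557) 1; Qmake (-633378085) 1; Qmake (-2246522277) 1; Qmake 1536214850 1; Qmake 136147717 1; Qmake (-64997965) 1];
  [:: Qmake 0 1; Qmake 0 1; Qmake 0 1; Qmake 0 1; Qmake 0 1; Qmake 0 1; Qmake 0 1; Qmake 0 1; Qmake 0 1; Qmake 0 1; Qmake 1073741824 1; Qmake 798583428 1; Qmake (-35716723) 1; Qmake 79822503 1; Qmake 33200530 1; Qmake 540818102 1; Qmake 332578963 1; Qmake (-36784821) 1; Qmake (-3675658592) 1; Qmake 2643457755 1; Qmake (-1577923687) 1; Qmake 756225431 1];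
  [:: Qmake 0 1; Qmake 0 1; Qmake 0 1; Qmake 0 1; Qmake 0 1; Qmake 0 1; Qmake 0 1; Qmake 0 1; Qmake 0 1; Qmake 0 1; Qmake 0 1; Qmake 1073741824 1; Qmake 145674292 1; Qmake 210537555 1; Qmake (-663938334) 1; Qmake 493772083 1; Qmake 240301784 1; Qmake 153829473 1; Qmake 10435784 1; Qmake (-152368360) 1; Qmake (-1867908225) 1; Qmake 986541521 1];
  [:: Qmake 0 1; Qmake 0 1; Qmake 0 1; Qmake 0 1; Qmake 0 1; Qmake 0 1; Qmake 0 1; Qmake 0 1; Qmake 0 1; Qmake 0 1; Qmake 0 1; Qmake 0 1; Qmake 1073741824 1; Qmake (-154346744) 1; Qmake (-583393340) 1; Qmake 207561765 1; Qmake 178207246 1; Qmake (-150096436) 1; Qmake (-143273688) 1; Qmake 318009942 1; Qmake (-234886719) 1; Qmake 37125044 1];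
  [:: Qmake 0 1; Qmake 0 1; Qmake 0 1; Qmake 0 1; Qmake 0 1; Qmake 0 1; Qmake 0 1; Qmake 0 1; Qmake 0 1; Qmake 0 1; Qmake 0 1; Qmake 0 1; Qmake 0 1; Qmake 1073741824 1; Qmake (-1073763294) 1; Qmake 48907 1; Qmake 45496 1; Qmake 60429 1; Qmake (-5421523) 1; Qmake 5407956 1; Qmake (-59338) 1; Qmake 3785 1];
  [:: Qmake 0 1; Qmake 0 1; Qmake 0 1; Qmake 0 1; Qmake 0 1; Qmake 0 1; Qmake 0 1; Qmake 0 1; Qmake 0 1; Qmake 0 1; Qmake 0 1; Qmake 0 1; Qmake 0 1; Qmake 0 1; Qmake 1073741824 1; Qmake (-309902059) 1; Qmake (-260316607) 1; Qmake (-514282713) 1; Qmake 185406727 1; Qmake (-438863482) 1; Qmake 359417355 1; Qmake (-64325753) 1];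
  [:: Qmake 0 1; Qmake 0 1; Qmake 0 1; Qmake 0 1; Qmake 0 1; Qmake 0 1; Qmake 0 1; Qmake 0 1; Qmake 0 1; Qmake 0 1; Qmake 0 1; Qmake 0 1; Qmake 0 1; Qmake 0 1; Qmake 0 1; Qmake 1073741824 1; Qmake (-925723393) 1; Qmake (-69265) 1; Qmake (-47398067) 1; Qmake (-25298591) 1; Qmake (-122188444) 1; Qmake 36281586 1];
  [:: Qmake 0 1; Qmake 0 1; Qmake 0 1; Qmake 0 1; Qmake 0 1; Qmake 0 1; Qmake 0 1; Qmake 0 1; Qmake 0 1; Qmake 0 1; Qmake 0 1; Qmake 0 1; Qmake 0 1; Qmake 0 1; Qmake 0 1; Qmake 0 1; Qmake 1073741824 1; Qmake 6200365 1; Qmake 60570142 1; Qmake (-601528205) 1; Qmake (-751843043) 1; Qmake 189585949 1];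
  [:: Qmake 0 1; Qmake 0 1; Qmake 0 1; Qmake 0 1; Qmake 0 1; Qmake 0 1; Qmake 0 1; Qmake 0 1; Qmake 0 1; Qmake 0 1; Qmake 0 1; Qmake 0 1; Qmake 0 1; Qmake 0 1; Qmake 0 1; Qmake 0 1; Qmake 0 1; Qmake 1073741824 1; Qmake (-136053787) 1; Qmake 140327042 1; Qmake 19139719 1; Qmake (-17435697) 1];
  [:: Qmake 0 1; Qmake 0 1; Qmake 0 1; Qmake 0 1; Qmake 0 1; Qmake 0 1; Qmake 0 1; Qmake 0 1; Qmake 0 1; Qmake 0 1; Qmake 0 1; Qmake 0 1; Qmake 0 1; Qmake 0 1; Qmake 0 1; Qmake 0 1; Qmake 0 1; Qmake 0 1; Qmake 1073741824 1; Qmake (-1073459833) 1; Qmake (-1201704) 1; Qmake 976461 1];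
  [:: Qmake 0 1; Qmake 0 1; Qmake 0 1; Qmake 0 1; Qmake 0 1; Qmake 0 1; Qmake 0 1; Qmake 0 1; Qmake 0 1; Qmake 0 1; Qmake 0 1; Qmake 0 1; Qmake 0 1; Qmake 0 1; Qmake 0 1; Qmake 0 1; Qmake 0 1; Qmake 0 1; Qmake 0 1; Qmake 1073741824 1; Qmake (-32257363) 1; Qmake 28216554 1];
  [:: Qmake 0 1; Qmake 0 1; Qmake 0 1; Qmake 0 1; Qmake 0 1; Qmake 0 1; Qmake 0 1; Qmake 0 1; Qmake 0 1; Qmake 0 1; Qmake 0 1; Qmake 0 1; Qmake 0 1; Qmake 0 1; Qmake 0 1; Qmake 0 1; Qmake 0 1; Qmake 0 1; Qmake 0 1; Qmake 0 1; Qmake 1073741824 1; Qmake (-831146271) 1];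
  [:: Qmake 0 1; Qmake 0 1; Qmake 0 1; Qmake 0 1; Qmake 0 1; Qmake 0 1; Qmake 0 1; Qmake 0 1; Qmake 0 1; Qmake 0 1; Qmake 0 1; Qmake 0 1; Qmake 0 1; Qmake 0 1; Qmake 0 1; Qmake 0 1; Qmake 0 1; Qmake 0 1; Qmake 0 1; Qmake 0 1; Qmake 0 1; Qmake 1073741824 1]].
Definition DyQ : seq Q := [:: Qmake 64916235925929 1; Qmake 988543712193 1; Qmake 99277979315962 1; Qmake 57135525474440 1; Qmake 79951867430802 1; Qmake 5518719684810 1; Qmake 320715679258 1; Qmake 35980295438 1; Qmake 7786906141 1; Qmake 497532415 1; Qmake 16211778946 1; Qmake 2947476740 1; Qmake 458849355 1; Qmake 1548153031803 1; Qmake 742829976 1; Qmake 2321566826 1; Qmake 516810743 1; Qmake 242172149 1; Qmake 244035008167 1; Qmake 268933757 1; Qmake 2388580368 1; Qmake 186154828 1].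

Lemma kQ_pos r : 0 < kfun kQ r.
Proof.
have /qpos_gt0/(_ r) : qpos kQ 30 by vm_compute.
by rewrite qrowE.
Qed.

Lemma xQ_pos : pos_state (xrow xQ).
Proof. by apply: qpos_gt0; vm_compute. Qed.

Lemma yQ_pos : pos_state (xrow yQ).
Proof. by apply: qpos_gt0; vm_compute. Qed.

Lemma xQ_neq_yQ : xrow xQ != xrow yQ.
Proof.
apply/eqP => /matrixP /(_ 0 (@Ordinal 22 MEK isT)); rewrite !qrowE.
exact: qr_neq.
Qed.

Lemma steady_state_of_check kq xq :
  qmeqb 1 22 [:: mkseq (massactionQ kq xq) 22] (qzeros 1 22) ->
  steady_state (kfun kq) (xrow xq).
Proof. by move=> /lift_eqb h; rewrite /steady_state massactionE /qrow h lift_zeros. Qed.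

Lemma xQ_steady : steady_state (kfun kQ) (xrow xQ).
Proof. by apply: steady_state_of_check; vm_compute. Qed.

Lemma yQ_steady : steady_state (kfun kQ) (xrow yQ).
Proof. by apply: steady_state_of_check; vm_compute. Qed.

Lemma yQ_sub_xQ_stoich : (xrow yQ - xrow xQ <= stoich)%MS.
Proof.
have yx_cS : qmeqb 1 22 (qmsubr 1 22 [:: yQ] [:: xQ]) (qmmr 1 30 22 [:: cQ] stoichQ).
  by vm_compute.
apply/submxP; exists (qrow 30 cQ).
by rewrite stoichE -lift_mmr -(lift_eqb yx_cS) lift_subr.
Qed.

Lemma xQ_stable : stable (kfun kQ) (xrow xQ).
Proof. by apply: (stable_of_lyapunov_check (Z := ZxQ) (D := DxQ)); vm_compute. Qed.

Lemma yQ_stable : stable (kfun kQ) (xrow yQ).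
Proof. by apply: (stable_of_lyapunov_check (Z := ZyQ) (D := DyQ)); vm_compute. Qed.

Theorem mainTheorem2 :
  exists k : 'I_30 -> Real, (forall r, 0 < k r) /\
  exists x y : 'rV[Real]_22,
    pos_state x /\ pos_state y /\ x != y /\
    steady_state k x /\ steady_state k y /\
    (y - x <= stoich)%MS /\
    stable k x /\ stable k y.
Proof.
exists (kfun kQ); split; first exact: kQ_pos.
exists (xrow xQ), (xrow yQ).
split; first exact: xQ_pos.
split; first exact: yQ_pos.
split; first exact: xQ_neq_yQ.
split; first exact: xQ_steady.
split; first exact: yQ_steady.
split; first exact: yQ_sub_xQ_stoich.
by split; [exact: xQ_stable | exact: yQ_stable].
Qed.
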